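(* For all closed terms $t_0,t_1$ of $\lambda_S$, if $t_0\equiv^E_p t_1$ then $t_0\approx^p_{\emptyset}t_1$.
   Context: Terms of $\lambda_S$: $t ::= x \mid \lambda x.t \mid t\,t \mid \mathcal{S}k.t \mid \langle t\rangle$ (shift binds $k$; $\langle\cdot\rangle$ is reset), up to $\alpha$-conversion. Values $v::=\lambda x.t$. Pure contexts $E ::= \Box \mid v\,E \mid E\,t$; evaluation contexts $F ::= \Box \mid v\,F \mid F\,t \mid \langle F\rangle$. Reduction: $F[(\lambda x.t)v]\to F[t\{v/x\}]$; $F[\langle E[\mathcal Sk.t]\rangle]\to F[\langle t\{\lambda x.\langle E[x]\rangle/k\}\rangle]$ ($x\notin\mathrm{fv}(E)$); $F[\langle v\rangle]\to F[v]$; $\to^*$ reflexive-transitive closure; $t\Downarrow t'$ iff $t\to^*t'$ and $t'$ irreducible. A program is a term $\langle t\rangle$ (ranged over by $p$). Closures: for $R$ a relation on closed terms, $\widetilde R$ is the smallest relation containing $R$, all $(x,x)$, closed under all term constructors, restricted to closed terms; $\widehat R$ is the smallest relation on closed evaluation contexts with $\Box\widehat R\Box$, $v_0F_0\widehat Rv_1F_1$ if $F_0\widehat RF_1,v_0\widetilde Rv_1$; $F_0t_0\widehat RF_1t_1$ if $F_0\widehat RF_1,t_0\widetilde Rt_1$; $\langle F_0\rangle\widehat R\langle F_1\rangle$ if $F_0\widehat RF_1$. Environmental bisimilarity for programs: an environment $\mathcal E$ is a relation on closed values; an environmental relation $\mathcal X$ is a set of environments and triples $(\mathcal E,t_0,t_1)$,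 $t_0,t_1$ closed, written $t_0\mathcal X_{\mathcal E}t_1$. $\mathcal X$ is an environmental bisimulation for programs if (1) if $t_0\mathcal X_{\mathcal E}t_1$ and $t_0,t_1$ are not both programs, then for all pure $E_0\widehat{\mathcal E}E_1$, $\langle E_0[t_0]\rangle\mathcal X_{\mathcal E}\langle E_1[t_1]\rangle$; (2) if $p_0\mathcal X_{\mathcal E}p_1$: (a) $p_0\to p_0'$ (a program) implies $p_1\to^*p_1'$ (a program) with $p_0'\mathcal X_{\mathcal E}p_1'$; (b) $p_0\to v_0$ implies $p_1\to^*v_1$ and $\{(v_0,v_1)\}\cup\mathcal E\in\mathcal X$; (c) symmetric conditions for $p_1$; (3) for $\mathcal E\in\mathcal X$, $(\lambda x.t_0)\mathcal E(\lambda x.t_1)$ and $v_0\widetilde{\mathcal E}v_1$ imply $t_0\{v_0/x\}\mathcal X_{\mathcal E}t_1\{v_1/x\}$. $\approx^p$ is the largest such relation; $t_0\approx^p_{\mathcal E}t_1$ means $(\mathcal E,t_0,t_1)\in\approx^p$. Evaluation-context equivalence: for closed $t_0,t_1$, $t_0\equiv^E_pt_1$ iff for every closed evaluation context $F$, $\langle F[t_0]\rangle\Downarrow$ a value iff $\langle F[t_1]\rangle\Downarrow$ a value. *)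

(* Terms of lambda_S in de Bruijn notation (alpha-conversion is
   built in). Shift binds its continuation variable k as index 0. *)
From Stdlib Require Import Arith List Relations.

Inductive term : Type :=
| Var   : nat -> term
| Lam   : term -> term
| App   : term -> term -> term
| Shift : term -> term
| Reset : term -> term.

Fixpoint lift (k : nat) (t : term) : term :=
  match t with
  | Var n => if k <=? n then Var (S n) else Var n
  | Lam u => Lam (lift (S k) u)
  | App a b => App (lift k a) (lift k b)
  | Shift u => Shift (lift (S k) u)
  | Reset u => Reset (lift k u)
  end.

Fixpoint liftn (n : nat) (t : term) : term :=
  match n with 0 => t | S m => lift 0 (liftn m t) end.

Fixpoint subst (k : nat) (v t : term) : term :=
  match t with
  | Var n => if n <? k then Var n
             else if n =? k then liftn k v else Var (pred n)
  | Lam u => Lam (subst (S k) v u)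
  | App a b => App (subst k v a) (subst k v b)
  | Shift u => Shift (subst (S k) v u)
  | Reset u => Reset (subst k v u)
  end.

Definition subst0 (t v : term) : term := subst 0 v t.

Fixpoint closed_at (n : nat) (t : term) : Prop :=
  match t with
  | Var m => m < n
  | Lam u => closed_at (S n) u
  | App a b => closed_at n a /\ closed_at n b
  | Shift u => closed_at (S n) u
  | Reset u => closed_at n u
  end.

Definition closed (t : term) : Prop := closed_at 0 t.

Definition is_value (t : term) : Prop := exists u, t = Lam u.

Definition is_program (t : term) : Prop := exists u, t = Reset u.

Inductive ctx : Type :=
| Hole   : ctx
| CAppR  : term -> ctx -> ctx
| CAppL  : ctx -> term -> ctx
| CReset : ctx -> ctx.

Fixpoint plug (c : ctx) (t : term) : term :=
  match c with
  | Hole => t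
  | CAppR v c' => App v (plug c' t)
  | CAppL c' u => App (plug c' t) u
  | CReset c' => Reset (plug c' t)
  end.

Fixpoint ctx_lift (k : nat) (c : ctx) : ctx :=
  match c with
  | Hole => Hole
  | CAppR v c' => CAppR (lift k v) (ctx_lift k c')
  | CAppL c' u => CAppL (ctx_lift k c') (lift k u)
  | CReset c' => CReset (ctx_lift k c')
  end.

Fixpoint eval_ctx (c : ctx) : Prop :=
  match c with
  | Hole => True
  | CAppR v c' => is_value v /\ eval_ctx c'
  | CAppL c' _ => eval_ctx c'
  | CReset c' => eval_ctx c'
  end.

Fixpoint pure_ctx (c : ctx) : Prop :=
  match c with
  | Hole => True
  | CAppR v c' => is_value v /\ pure_ctx c'
  | CAppL c' _ => pure_ctx c'
  | CReset _ => False
  end.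

Fixpoint ctx_closed (c : ctx) : Prop :=
  match c with
  | Hole => True
  | CAppR v c' => closed v /\ ctx_closed c'
  | CAppL c' u => ctx_closed c' /\ closed u
  | CReset c' => ctx_closed c'
  end.

Inductive step : term -> term -> Prop :=
| step_beta : forall F t v,
    eval_ctx F -> is_value v ->
    step (plug F (App (Lam t) v)) (plug F (subst0 t v))
| step_shift : forall F E t,
    eval_ctx F -> pure_ctx E ->
    step (plug F (Reset (plug E (Shift t))))
         (plug F (Reset (subst0 t (Lam (Reset (plug (ctx_lift 0 E) (Var 0)))))))
| step_reset : forall F v,
    eval_ctx F -> is_value v ->
    step (plug F (Reset v)) (plug F v).

Definition steps : term -> term -> Prop := clos_refl_trans term step.

Definition irreducible (t : term) : Prop := forall t', ~ step t t'.

Definition evals_to_value (t : term) : Prop :=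
  exists v, is_value v /\ steps t v /\ irreducible v.

Definition ctx_equiv (t0 t1 : term) : Prop :=
  forall F, eval_ctx F -> ctx_closed F ->
    (evals_to_value (Reset (plug F t0)) <-> evals_to_value (Reset (plug F t1))).

Definition rel := term -> term -> Prop.

Inductive tilde_open (R : rel) : rel :=
| tl_base  : forall a b, R a b -> tilde_open R a b
| tl_var   : forall n, tilde_open R (Var n) (Var n)
| tl_lam   : forall a b, tilde_open R a b -> tilde_open R (Lam a) (Lam b)
| tl_app   : forall a a' b b', tilde_open R a b -> tilde_open R a' b' ->
               tilde_open R (App a a') (App b b')
| tl_shift : forall a b, tilde_open R a b -> tilde_open R (Shift a) (Shift b)
| tl_reset : forall a b, tilde_open R a b -> tilde_open R (Reset a) (Reset b).

Definition tilde (R : rel) : rel :=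
  fun a b => tilde_open R a b /\ closed a /\ closed b.

Inductive hat (R : rel) : ctx -> ctx -> Prop :=
| hat_hole  : hat R Hole Hole
| hat_appr  : forall v0 v1 F0 F1, is_value v0 -> is_value v1 ->
    hat R F0 F1 -> tilde R v0 v1 -> hat R (CAppR v0 F0) (CAppR v1 F1)
| hat_appl  : forall F0 F1 t0 t1,
    hat R F0 F1 -> tilde R t0 t1 -> hat R (CAppL F0 t0) (CAppL F1 t1)
| hat_reset : forall F0 F1, hat R F0 F1 -> hat R (CReset F0) (CReset F1).

Definition is_env (E : rel) : Prop :=
  forall v0 v1, E v0 v1 -> is_value v0 /\ is_value v1 /\ closed v0 /\ closed v1.

(* environmental relation: a set of environments and a set of triples *)
Record env_rel : Type := {
  X_env : rel -> Prop;
  X_tri : rel -> term -> term -> Prop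
}.

Definition env_rel_wf (X : env_rel) : Prop :=
  (forall E, X_env X E -> is_env E) /\
  (forall E t0 t1, X_tri X E t0 t1 -> is_env E /\ closed t0 /\ closed t1).

Definition add_pair (v0 v1 : term) (E : rel) : rel :=
  fun a b => (a = v0 /\ b = v1) \/ E a b.

Definition env_bisim_p (X : env_rel) : Prop :=
  env_rel_wf X /\
  (forall E t0 t1, X_tri X E t0 t1 -> ~ (is_program t0 /\ is_program t1) ->
     forall E0 E1, pure_ctx E0 -> pure_ctx E1 -> hat E E0 E1 ->
       X_tri X E (Reset (plug E0 t0)) (Reset (plug E1 t1))) /\
  (forall E p0 p1, X_tri X E p0 p1 -> is_program p0 -> is_program p1 ->
     (forall p0', step p0 p0' -> is_program p0' ->
        exists p1', steps p1 p1' /\ is_program p1' /\ X_tri X E p0' p1') /\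
     (forall v0, step p0 v0 -> is_value v0 ->
        exists v1, steps p1 v1 /\ is_value v1 /\ X_env X (add_pair v0 v1 E)) /\
     (forall p1', step p1 p1' -> is_program p1' ->
        exists p0', steps p0 p0' /\ is_program p0' /\ X_tri X E p0' p1') /\
     (forall v1, step p1 v1 -> is_value v1 ->
        exists v0, steps p0 v0 /\ is_value v0 /\ X_env X (add_pair v0 v1 E))) /\
  (forall E, X_env X E -> forall t0 t1 v0 v1,
     E (Lam t0) (Lam t1) -> is_value v0 -> is_value v1 -> tilde E v0 v1 ->
     X_tri X E (subst0 t0 v0) (subst0 t1 v1)).

Definition bisimilar_p (E : rel) (t0 t1 : term) : Prop :=
  exists X, env_bisim_p X /\ X_tri X E t0 t1.

Definition empty_rel : rel := fun _ _ => False.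

From Stdlib Require Import Arith Relations Lia.

(* The candidate bisimulation relates [t0] and [t1] under [E] when [<F0[t0]>]
   and [<F1[t1]>] co-terminate for all [Ê]-related evaluation contexts, and it
   contains the environments [E] whose [Ẽ]-related terms co-terminate under a
   reset.  Contextual equivalence puts [(∅, t0, t1)] in it, since [∅^] is the
   identity on closed contexts.  Clause (1) composes contexts, clause (3) is a
   beta expansion, and for clause (2) a step preserves termination by
   determinism.  When [p0] reaches a value [v0], co-termination in the empty
   context gives [p1 ->* v1]; a pair of terms related by the extended
   environment is, after abstracting the new pair into a variable, the
   beta-reduct of [(λx.a) p0] and [(λx.b) p1], which are [Ê]-related contexts
   applied to [p0] and [p1]. *)

Lemma closed_at_mono : forall t j m, closed_at j t -> j <= m -> closed_at m t.
Proof.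
  induction t; simpl; intros j m H Hle.
  - lia.
  - eapply IHt; eauto; lia.
  - destruct H; split; eauto.
  - eapply IHt; eauto; lia.
  - eauto.
Qed.

Lemma lift_closed_at : forall t j k, closed_at j t -> j <= k -> lift k t = t.
Proof.
  induction t; simpl; intros j k H Hle.
  - destruct (Nat.leb_spec k n); [lia | reflexivity].
  - f_equal; apply IHt with (S j); auto; lia.
  - destruct H; f_equal; eauto.
  - f_equal; apply IHt with (S j); auto; lia.
  - f_equal; eauto.
Qed.

Lemma liftn_closed : forall n t, closed t -> liftn n t = t.
Proof.
  induction n; simpl; intros t Ht; auto.
  rewrite IHn; auto. apply lift_closed_at with 0; auto.
Qed.

Lemma subst_closed_at : forall t j k v, closed_at j t -> j <= k -> subst k v t = t.
Proof.
  induction t; simpl; intros j k v H Hle.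
  - destruct (Nat.ltb_spec n k); [reflexivity | lia].
  - f_equal; apply IHt with (S j); auto; lia.
  - destruct H; f_equal; eauto.
  - f_equal; apply IHt with (S j); auto; lia.
  - f_equal; eauto.
Qed.

Lemma closed_at_subst : forall t m k v, closed v -> closed_at (S m) t -> k <= m ->
  closed_at m (subst k v t).
Proof.
  induction t; simpl; intros m k v Hv H Hle.
  - destruct (Nat.ltb_spec n k); simpl; [lia |].
    destruct (Nat.eqb_spec n k); simpl; [| lia].
    rewrite liftn_closed; auto. apply closed_at_mono with 0; auto; lia.
  - apply IHt; auto; lia.
  - destruct H; split; eauto.
  - apply IHt; auto; lia.
  - eauto.
Qed.

Lemma subst_var_lt : forall k v n, n < k -> subst k v (Var n) = Var n.
Proof. intros k v n H; simpl; destruct (Nat.ltb_spec n k); [auto | lia]. Qed.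

Lemma subst_var_gt : forall k v n, k < n -> subst k v (Var n) = Var (pred n).
Proof.
  intros k v n H; simpl.
  destruct (Nat.ltb_spec n k); [lia |]. destruct (Nat.eqb_spec n k); [lia | auto].
Qed.

Lemma closed_plug : forall F t, ctx_closed F -> closed t -> closed (plug F t).
Proof. unfold closed; induction F; simpl; intros; unfold closed in *; intuition eauto. Qed.

Lemma closed_plug_inv : forall F t, closed (plug F t) -> closed t.
Proof. unfold closed; induction F; simpl; intros; intuition eauto. Qed.

Lemma closed_plug_replace : forall F t u, closed (plug F t) -> closed u -> closed (plug F u).
Proof. unfold closed; induction F; simpl; intros; intuition eauto. Qed.

Lemma closed_at_plug_ctx_lift : forall E t u, closed (plug E t) -> closed_at 1 u ->
  closed_at 1 (plug (ctx_lift 0 E) u).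
Proof.
  unfold closed; induction E; simpl; intros t' u H Hu; auto.
  - destruct H. rewrite (lift_closed_at t 0 0); auto.
    split; eauto. apply closed_at_mono with 0; auto.
  - destruct H. rewrite (lift_closed_at t 0 0); auto.
    split; eauto. apply closed_at_mono with 0; auto.
  - eauto.
Qed.

Fixpoint ctx_comp (F G : ctx) : ctx :=
  match F with
  | Hole => G
  | CAppR v F' => CAppR v (ctx_comp F' G)
  | CAppL F' u => CAppL (ctx_comp F' G) u
  | CReset F' => CReset (ctx_comp F' G)
  end.

Lemma plug_ctx_comp : forall F G t, plug (ctx_comp F G) t = plug F (plug G t).
Proof. induction F; simpl; intros; auto; rewrite IHF; auto. Qed.

Lemma eval_ctx_comp : forall F G, eval_ctx F -> eval_ctx G -> eval_ctx (ctx_comp F G).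
Proof. induction F; simpl; intros; intuition. Qed.

Inductive contraction : term -> term -> Prop :=
| contr_beta : forall t v, is_value v -> contraction (App (Lam t) v) (subst0 t v)
| contr_shift : forall E t, pure_ctx E ->
    contraction (Reset (plug E (Shift t)))
                (Reset (subst0 t (Lam (Reset (plug (ctx_lift 0 E) (Var 0))))))
| contr_reset : forall v, is_value v -> contraction (Reset v) v.

Lemma step_decompose : forall a b, step a b ->
  exists F r r', eval_ctx F /\ contraction r r' /\ a = plug F r /\ b = plug F r'.
Proof. intros a b H; destruct H; do 3 eexists; repeat split; eauto; constructor; auto. Qed.

Lemma step_contraction : forall F r r', eval_ctx F -> contraction r r' ->
  step (plug F r) (plug F r').
Proof. intros F r r' HF H; destruct H; constructor; auto. Qed.

Lemma step_plug : forall a b G, step a b -> eval_ctx G -> step (plug G a) (plug G b).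
Proof.
  intros a b G H HG. apply step_decompose in H as (F & r & r' & HF & Hr & -> & ->).
  rewrite <- !plug_ctx_comp. apply step_contraction; auto. apply eval_ctx_comp; auto.
Qed.

Lemma steps_plug : forall a b G, steps a b -> eval_ctx G -> steps (plug G a) (plug G b).
Proof.
  intros a b G H HG; induction H.
  - apply rt_step, step_plug; auto.
  - apply rt_refl.
  - eapply rt_trans; eauto.
Qed.

Lemma contraction_closed : forall r r', contraction r r' -> closed r -> closed r'.
Proof.
  unfold closed; intros r r' H Hc; destruct H; simpl in *.
  - destruct Hc. apply closed_at_subst; auto.
  - apply closed_at_subst; auto.
    + unfold closed; simpl. eapply closed_at_plug_ctx_lift; eauto. simpl; lia.
    + apply (closed_plug_inv E (Shift t)); auto.
  - auto.
Qed.

Lemma step_closed : forall a b, step a b -> closed a -> closed b.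
Proof.
  intros a b H Hc. apply step_decompose in H as (F & r & r' & HF & Hr & -> & ->).
  eapply closed_plug_replace; eauto.
  eapply contraction_closed; eauto. eapply closed_plug_inv; eauto.
Qed.

Lemma steps_closed : forall a b, steps a b -> closed a -> closed b.
Proof. intros a b H; induction H; eauto using step_closed. Qed.

Lemma plug_contraction_not_lam : forall F r r' u, contraction r r' -> plug F r <> Lam u.
Proof. intros F r r' u H; destruct F; simpl; try discriminate; destruct H; discriminate. Qed.

Lemma plug_shift_not_lam : forall E t u, plug E (Shift t) <> Lam u.
Proof. intros E t u; destruct E; discriminate. Qed.

Lemma plug_shift_not_reset : forall E t u, pure_ctx E -> plug E (Shift t) <> Reset u.
Proof. intros E t u; destruct E; simpl; try discriminate; contradiction. Qed.

Lemma plug_shift_not_plug_contraction : forall E t F r r',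
  pure_ctx E -> eval_ctx F -> contraction r r' -> plug E (Shift t) <> plug F r.
Proof.
  induction E; intros t0 F r r' HE HF Hr Heq; destruct F; simpl in *;
    try discriminate; try contradiction.
  - subst r; inversion Hr.
  - subst r; inversion Hr as [? v [u Hu] | |]; subst. eapply plug_shift_not_lam; eauto.
  - injection Heq; intros. destruct HE, HF. eapply IHE; eauto.
  - injection Heq; intros. destruct HE as [[w Hw] _]; subst.
    eapply plug_contraction_not_lam; eauto.
  - subst r; inversion Hr; subst. eapply plug_shift_not_lam; eauto.
  - injection Heq; intros. destruct HF as [[w Hw] _]; subst.
    eapply plug_shift_not_lam; eauto.
  - injection Heq; intros. eapply IHE; eauto.
Qed.

Lemma contraction_plug_hole : forall F r r' q q', eval_ctx F ->
  contraction r r' -> contraction q q' -> r = plug F q -> F = Hole.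
Proof.
  intros F r r' q q' HF Hr Hq Heq. destruct F; auto; simpl in *; exfalso; subst r.
  - inversion Hr as [? v [u Hu] | |]; subst. eapply plug_contraction_not_lam; eauto.
  - inversion Hr; subst. eapply plug_contraction_not_lam; eauto.
  - inversion Hr as [| |v [u Hu]]; subst.
    + eapply plug_shift_not_plug_contraction; eauto.
    + eapply plug_contraction_not_lam; eauto.
Qed.

Lemma unique_decomposition : forall F F' r r' q q', eval_ctx F -> eval_ctx F' ->
  contraction r r' -> contraction q q' -> plug F r = plug F' q -> F = F' /\ r = q.
Proof.
  induction F; intros F' r r' q q' HF HF' Hr Hq Heq; simpl in *.
  - assert (F' = Hole) by (eapply (contraction_plug_hole F' r r' q q'); eauto).
    subst; auto.
  - destruct F'; simpl in *; try discriminate.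
    + assert (CAppR t F = Hole) by (eapply (contraction_plug_hole _ q q' r r'); eauto).
      discriminate.
    + injection Heq; intros. destruct HF, HF'.
      destruct (IHF F' r r' q q') as [-> ->]; subst; auto.
    + injection Heq; intros. destruct HF as [[w Hw] _]; subst.
      exfalso; eapply plug_contraction_not_lam; eauto.
  - destruct F'; simpl in *; try discriminate.
    + assert (CAppL F t = Hole) by (eapply (contraction_plug_hole _ q q' r r'); eauto).
      discriminate.
    + injection Heq; intros. destruct HF' as [[w Hw] _]; subst.
      exfalso; eapply (plug_contraction_not_lam F r r'); eauto.
    + injection Heq; intros. destruct (IHF F' r r' q q') as [-> ->]; subst; auto.
  - destruct F'; simpl in *; try discriminate.
    + assert (CReset F = Hole) by (eapply (contraction_plug_hole _ q q' r r'); eauto).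
      discriminate.
    + injection Heq; intros. destruct (IHF F' r r' q q') as [-> ->]; subst; auto.
Qed.

Lemma plug_shift_inj : forall E E' t t', pure_ctx E -> pure_ctx E' ->
  plug E (Shift t) = plug E' (Shift t') -> E = E' /\ t = t'.
Proof.
  induction E; destruct E'; simpl; intros t1 t2 H1 H2 Heq;
    try discriminate; try contradiction.
  - injection Heq; auto.
  - injection Heq; intros. destruct H1, H2. edestruct IHE; eauto. subst; auto.
  - injection Heq; intros. destruct H1 as [[w Hw] _]; subst.
    exfalso; eapply plug_shift_not_lam; eauto.
  - injection Heq; intros. destruct H2 as [[w Hw] _]; subst.
    exfalso; eapply plug_shift_not_lam; eauto.
  - injection Heq; intros. edestruct IHE; eauto. subst; auto.
Qed.

Lemma contraction_det : forall r a b, contraction r a -> contraction r b -> a = b.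
Proof.
  intros r a b Ha Hb. destruct Ha; inversion Hb as [| | v' [w Hw]]; subst; auto.
  - destruct (plug_shift_inj E0 E t0 t) as [-> ->]; auto.
  - exfalso; eapply plug_shift_not_lam; eauto.
  - match goal with Hv : is_value _ |- _ => destruct Hv as [w Hw] end.
    exfalso; eapply plug_shift_not_lam; eauto.
Qed.

Lemma step_det : forall a b c, step a b -> step a c -> b = c.
Proof.
  intros a b c H1 H2.
  apply step_decompose in H1 as (F & r & r' & HF & Hr & -> & ->).
  apply step_decompose in H2 as (F' & q & q' & HF' & Hq & Heq & ->).
  destruct (unique_decomposition F F' r r' q q') as [-> ->]; auto.
  rewrite (contraction_det _ _ _ Hr Hq); auto.
Qed.

Lemma value_irreducible : forall v, is_value v -> irreducible v.
Proof.
  intros v [u ->] t' H. apply step_decompose in H as (F & r & r' & HF & Hr & Heq & _).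
  eapply plug_contraction_not_lam; eauto.
Qed.

Lemma evals_to_value_step : forall a b, step a b ->
  (evals_to_value a <-> evals_to_value b).
Proof.
  intros a b H; split; intros (v & Hv & Hs & Hi).
  - apply clos_rt_rt1n in Hs. destruct Hs as [| a' v' Ha' Hs'].
    + exfalso; eapply Hi; eauto.
    + rewrite (step_det _ _ _ H Ha'). exists v'; repeat split; auto.
      apply clos_rt1n_rt; auto.
  - exists v; repeat split; auto. eapply rt_trans; [apply rt_step |]; eauto.
Qed.

Lemma evals_to_value_steps : forall a b, steps a b ->
  (evals_to_value a <-> evals_to_value b).
Proof. intros a b H; induction H; [apply evals_to_value_step; auto | tauto | tauto]. Qed.

Lemma evals_to_value_beta : forall F t v, eval_ctx F -> is_value v ->
  (evals_to_value (Reset (plug F (App (Lam t) v))) <->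
   evals_to_value (Reset (plug F (subst0 t v)))).
Proof.
  intros F t v HF Hv. apply evals_to_value_step, (step_beta (CReset F)); simpl; auto.
Qed.

Lemma evals_to_value_of_step : forall p v, step p v -> is_value v ->
  evals_to_value (Reset p).
Proof.
  intros p v H Hv. exists v; repeat split; auto.
  - eapply rt_trans.
    + apply rt_step, (step_plug p v (CReset Hole)); simpl; auto.
    + apply rt_step, (step_reset Hole); simpl; auto.
  - apply value_irreducible; auto.
Qed.

Lemma step_reset_program : forall q y, step (Reset (Reset q)) y ->
  exists p', y = Reset p' /\ step (Reset q) p'.
Proof.
  intros q y H. apply step_decompose in H as (F & r & r' & HF & Hr & Heq & ->).
  destruct F; simpl in *; try discriminate.
  - subst r. inversion Hr as [| | v [w Hw]]; subst; try discriminate.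
    exfalso; eapply plug_shift_not_reset; eauto.
  - injection Heq; intros ->. exists (plug F r'); split; auto.
    apply step_contraction; auto.
Qed.

Lemma step_program_shape : forall q y, step (Reset q) y -> is_program y \/ is_value y.
Proof.
  intros q y H. apply step_decompose in H as (F & r & r' & HF & Hr & Heq & ->).
  destruct F; simpl in *; try discriminate.
  - subst r. inversion Hr; subst; [left; eexists; eauto | right; auto].
  - left; eexists; eauto.
Qed.

(* Under a reset, a program can only make its own steps, so a value of [<p>]
   is reached through a value of [p]. *)
Lemma program_value_of_evals : forall p, is_program p -> evals_to_value (Reset p) ->
  exists v, is_value v /\ steps p v.
Proof.
  intros p Hp (w & Hw & Hs & _). apply clos_rt_rt1n in Hs.
  assert (Hpv : is_program p \/ is_value p) by auto.
  clear Hp. remember (Reset p) as x eqn:Hx. revert p Hx Hpv.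
  induction Hs as [x | x y w Hxy Hs IH]; intros p Hx Hpv; subst.
  - destruct Hw; discriminate.
  - destruct Hpv as [[q ->] | Hv].
    + destruct (step_reset_program _ _ Hxy) as (p' & -> & Hp').
      destruct (IH Hw p' eq_refl) as (v & Hv & Hs'); [eapply step_program_shape; eauto |].
      exists v; split; auto. eapply rt_trans; [apply rt_step |]; eauto.
    + exists p; split; auto. apply rt_refl.
Qed.

Lemma hat_eval_ctx : forall E F0 F1, hat E F0 F1 -> eval_ctx F0 /\ eval_ctx F1.
Proof. intros E F0 F1 H; induction H; simpl; tauto. Qed.

Lemma hat_ctx_closed : forall E F0 F1, hat E F0 F1 -> ctx_closed F0 /\ ctx_closed F1.
Proof. intros E F0 F1 H; induction H; simpl; unfold tilde in *; tauto. Qed.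

Lemma hat_plug : forall E F0 F1 s0 s1, hat E F0 F1 -> tilde E s0 s1 ->
  tilde E (plug F0 s0) (plug F1 s1).
Proof.
  unfold tilde, closed; intros E F0 F1 s0 s1 H; induction H; simpl; intros Hs; auto.
  - destruct (IHhat Hs) as (Ho & ? & ?), H2 as (Ho' & ? & ?).
    repeat split; auto. apply tl_app; auto.
  - destruct (IHhat Hs) as (Ho & ? & ?), H0 as (Ho' & ? & ?).
    repeat split; auto. apply tl_app; auto.
  - destruct (IHhat Hs) as (Ho & ? & ?). repeat split; auto. apply tl_reset; auto.
Qed.

Lemma hat_ctx_comp : forall E F0 F1 G0 G1, hat E F0 F1 -> hat E G0 G1 ->
  hat E (ctx_comp F0 G0) (ctx_comp F1 G1).
Proof. intros E F0 F1 G0 G1 H; induction H; simpl; intros; try constructor; auto. Qed.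

Lemma tilde_open_empty : forall a b, tilde_open empty_rel a b -> a = b.
Proof. intros a b H; induction H; subst; auto; contradiction. Qed.

Lemma hat_empty : forall F0 F1, hat empty_rel F0 F1 -> F0 = F1.
Proof.
  intros F0 F1 H; induction H as [| ? ? ? ? ? ? ? ? [Hv _] | ? ? ? ? ? ? [Ht _] |];
    subst; auto.
  - apply tilde_open_empty in Hv; subst; auto.
  - apply tilde_open_empty in Ht; subst; auto.
Qed.

(* Every occurrence of the new pair [(v0, v1)] is replaced by the variable [k]. *)
Lemma tilde_open_add_pair_abstract : forall v0 v1 E a b,
  is_env E -> closed v0 -> closed v1 -> tilde_open (add_pair v0 v1 E) a b ->
  forall k m, k <= m -> closed_at m a -> closed_at m b ->
  exists a' b', tilde_open E a' b' /\ subst k v0 a' = a /\ subst k v1 b' = b /\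
    closed_at (S m) a' /\ closed_at (S m) b'.
Proof.
  intros v0 v1 E a b HE Hv0 Hv1 H.
  induction H as [a b [[-> ->] | H] | n | a b H IH | a a' b b' H IH H' IH'
                 | a b H IH | a b H IH]; simpl; intros k m Hk Ha Hb.
  - exists (Var k), (Var k). simpl.
    rewrite Nat.ltb_irrefl, Nat.eqb_refl, !liftn_closed; auto.
    repeat split; try apply tl_var; simpl; lia.
  - destruct (HE _ _ H) as (_ & _ & Ha0 & Hb0). exists a, b.
    rewrite (subst_closed_at a 0), (subst_closed_at b 0); try lia; auto.
    repeat split; auto using tl_base; apply closed_at_mono with 0; auto; lia.
  - destruct (Nat.ltb_spec n k).
    + exists (Var n), (Var n). rewrite !subst_var_lt by lia.
      repeat split; try apply tl_var; simpl; lia.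
    + exists (Var (S n)), (Var (S n)). rewrite !subst_var_gt by lia.
      repeat split; try apply tl_var; simpl; lia.
  - destruct (IH (S k) (S m)) as (a0 & b0 & Ho & <- & <- & ? & ?); auto; try lia.
    exists (Lam a0), (Lam b0). repeat split; auto using tl_lam.
  - destruct Ha, Hb.
    destruct (IH k m) as (a0 & b0 & Ho & <- & <- & ? & ?); auto.
    destruct (IH' k m) as (a1 & b1 & Ho' & <- & <- & ? & ?); auto.
    exists (App a0 a1), (App b0 b1). repeat split; auto using tl_app.
  - destruct (IH (S k) (S m)) as (a0 & b0 & Ho & <- & <- & ? & ?); auto; try lia.
    exists (Shift a0), (Shift b0). repeat split; auto using tl_shift.
  - destruct (IH k m) as (a0 & b0 & Ho & <- & <- & ? & ?); auto.
    exists (Reset a0), (Reset b0). repeat split; auto using tl_reset.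
Qed.

Definition sound_env (E : rel) : Prop :=
  is_env E /\
  forall s0 s1, tilde E s0 s1 -> (evals_to_value (Reset s0) <-> evals_to_value (Reset s1)).

Definition ctx_bisim (E : rel) (t0 t1 : term) : Prop :=
  is_env E /\ closed t0 /\ closed t1 /\
  forall F0 F1, hat E F0 F1 ->
    (evals_to_value (Reset (plug F0 t0)) <-> evals_to_value (Reset (plug F1 t1))).

Definition ctx_env_rel : env_rel := {| X_env := sound_env; X_tri := ctx_bisim |}.

Lemma ctx_bisim_evals : forall E t0 t1, ctx_bisim E t0 t1 ->
  (evals_to_value (Reset t0) <-> evals_to_value (Reset t1)).
Proof. intros E t0 t1 (_ & _ & _ & HF). apply (HF Hole Hole), hat_hole. Qed.

Lemma ctx_bisim_plug : forall E t0 t1 G0 G1, ctx_bisim E t0 t1 -> hat E G0 G1 ->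
  ctx_bisim E (plug G0 t0) (plug G1 t1).
Proof.
  intros E t0 t1 G0 G1 (HE & Ht0 & Ht1 & HF) HG.
  destruct (hat_ctx_closed _ _ _ HG).
  split; [| split; [| split]]; auto using closed_plug.
  intros F0 F1 HF01. rewrite <- !plug_ctx_comp. apply HF, hat_ctx_comp; auto.
Qed.

Lemma ctx_bisim_step_l : forall E p0 p1 p0', ctx_bisim E p0 p1 -> step p0 p0' ->
  ctx_bisim E p0' p1.
Proof.
  intros E p0 p1 p0' (HE & Hp0 & Hp1 & HF) Hs.
  split; [| split; [| split]]; eauto using step_closed.
  intros F0 F1 HF01. rewrite <- (HF F0 F1 HF01). symmetry.
  apply evals_to_value_step, (step_plug _ _ (CReset F0)); auto.
  apply (hat_eval_ctx _ _ _ HF01).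
Qed.

Lemma ctx_bisim_step_r : forall E p0 p1 p1', ctx_bisim E p0 p1 -> step p1 p1' ->
  ctx_bisim E p0 p1'.
Proof.
  intros E p0 p1 p1' (HE & Hp0 & Hp1 & HF) Hs.
  split; [| split; [| split]]; eauto using step_closed.
  intros F0 F1 HF01. rewrite (HF F0 F1 HF01).
  apply evals_to_value_step, (step_plug _ _ (CReset F1)); auto.
  apply (hat_eval_ctx _ _ _ HF01).
Qed.

Lemma ctx_bisim_values_sound : forall E p0 p1 v0 v1, ctx_bisim E p0 p1 ->
  steps p0 v0 -> steps p1 v1 -> is_value v0 -> is_value v1 ->
  sound_env (add_pair v0 v1 E).
Proof.
  intros E p0 p1 v0 v1 (HE & Hp0 & Hp1 & HF) Hs0 Hs1 Hv0 Hv1.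
  assert (Hc0 : closed v0) by eauto using steps_closed.
  assert (Hc1 : closed v1) by eauto using steps_closed.
  split; [intros a b [[-> ->] | H]; auto |].
  intros s0 s1 (Ho & Hcs0 & Hcs1).
  destruct (tilde_open_add_pair_abstract v0 v1 E s0 s1 HE Hc0 Hc1 Ho 0 0)
    as (a & b & Hab & <- & <- & Ha & Hb); auto.
  assert (Hred : forall u p v, is_value v -> steps p v ->
            evals_to_value (Reset (subst0 u v)) <-> evals_to_value (Reset (App (Lam u) p))).
  { intros u p v Hv Hs. rewrite <- (evals_to_value_beta Hole u v); simpl; auto.
    symmetry. apply evals_to_value_steps, (steps_plug _ _ (CReset (CAppR (Lam u) Hole)));
      simpl; auto. split; auto. eexists; eauto. }
  rewrite (Hred a p0 v0), (Hred b p1 v1); auto.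
  apply (HF (CAppR (Lam a) Hole) (CAppR (Lam b) Hole)).
  apply hat_appr; [eexists; eauto | eexists; eauto | apply hat_hole |].
  repeat split; auto using tl_lam.
Qed.

Lemma ctx_bisim_value_l : forall E p0 p1 v0, ctx_bisim E p0 p1 -> is_program p1 ->
  step p0 v0 -> is_value v0 ->
  exists v1, steps p1 v1 /\ is_value v1 /\ sound_env (add_pair v0 v1 E).
Proof.
  intros E p0 p1 v0 HX Hp1 Hs Hv0.
  destruct (program_value_of_evals p1 Hp1) as (v1 & Hv1 & Hs1).
  { apply (ctx_bisim_evals _ _ _ HX). eapply evals_to_value_of_step; eauto. }
  exists v1; split; [| split]; auto.
  apply (ctx_bisim_values_sound E p0 p1); auto; apply rt_step; auto.
Qed.

Lemma ctx_bisim_value_r : forall E p0 p1 v1, ctx_bisim E p0 p1 -> is_program p0 ->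
  step p1 v1 -> is_value v1 ->
  exists v0, steps p0 v0 /\ is_value v0 /\ sound_env (add_pair v0 v1 E).
Proof.
  intros E p0 p1 v1 HX Hp0 Hs Hv1.
  destruct (program_value_of_evals p0 Hp0) as (v0 & Hv0 & Hs0).
  { apply (ctx_bisim_evals _ _ _ HX). eapply evals_to_value_of_step; eauto. }
  exists v0; split; [| split]; auto.
  apply (ctx_bisim_values_sound E p0 p1); auto; apply rt_step; auto.
Qed.

Lemma sound_env_beta : forall E t0 t1 v0 v1, sound_env E -> E (Lam t0) (Lam t1) ->
  tilde E v0 v1 -> is_value v0 -> is_value v1 -> ctx_bisim E (subst0 t0 v0) (subst0 t1 v1).
Proof.
  intros E t0 t1 v0 v1 (HE & HS) HEl (Hv & Hcv0 & Hcv1) Hv0 Hv1.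
  destruct (HE _ _ HEl) as (_ & _ & Hl0 & Hl1).
  split; [| split; [| split]]; try apply closed_at_subst; auto.
  intros F0 F1 HF01. destruct (hat_eval_ctx _ _ _ HF01).
  rewrite <- !evals_to_value_beta; auto.
  apply HS, hat_plug; auto.
  repeat split; auto using tl_app, tl_base.
Qed.

Lemma ctx_env_rel_bisim : env_bisim_p ctx_env_rel.
Proof.
  split; [| split; [| split]]; simpl.
  - split; [intros E [HE _] | intros E a b (HE & Ha & Hb & _)]; auto.
  - intros E t0 t1 HX _ E0 E1 _ _ HE01.
    apply (ctx_bisim_plug _ _ _ (CReset E0) (CReset E1)); auto using hat_reset.
  - intros E p0 p1 HX Hp0 Hp1. split; [| split; [| split]].
    + intros p0' Hs _. exists p1; split; [apply rt_refl |]. eauto using ctx_bisim_step_l.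
    + intros v0 Hs Hv0. eapply ctx_bisim_value_l; eauto.
    + intros p1' Hs _. exists p0; split; [apply rt_refl |]. eauto using ctx_bisim_step_r.
    + intros v1 Hs Hv1. eapply ctx_bisim_value_r; eauto.
  - intros E HE t0 t1 v0 v1 HEl Hv0 Hv1 Hv. apply sound_env_beta; auto.
Qed.

Theorem lemma17 : forall t0 t1 : term,
  closed t0 -> closed t1 -> ctx_equiv t0 t1 -> bisimilar_p empty_rel t0 t1.
Proof.
  intros t0 t1 Hc0 Hc1 Heq. exists ctx_env_rel; split; [apply ctx_env_rel_bisim |].
  simpl; split; [intros a b [] | split; [| split]]; auto.
  intros F0 F1 HF01.
  destruct (hat_eval_ctx _ _ _ HF01), (hat_ctx_closed _ _ _ HF01).
  apply hat_empty in HF01; subst F1. apply Heq; auto.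
Qed.
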